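(* Let $\Bbbk$ be an algebraically closed field and $A$ any finite dimensional $\Bbbk$-algebra. Then $\operatorname{HHdim} T(T(A))=\infty$.
   Context: For a finite dimensional algebra $B$, $T(B)=B\ltimes DB$ is the trivial extension: the vector space $B\oplus DB$, where $DB=\operatorname{Hom}_\Bbbk(B,\Bbbk)$ with its natural bimodule structure, with multiplication $(a,f)(b,g)=(ab,ag+fb)$. $\operatorname{HH}_n(B)=\operatorname{Tor}^{B\otimes_\Bbbk B^{\mathrm{op}}}_n(B,B)$ is the $n$-th Hochschild homology group, and $\operatorname{HHdim}B=\sup\{n\mid \operatorname{HH}_n(B)\neq 0\}$. *)

(* Finite-dimensional algebras are given by structure
   constants w.r.t. a basis; Hochschild homology is computed by the
   (unnormalized) Hochschild complex B^{(x)(n+1)} with the standard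
   boundary, which computes Tor^{B^e}_n(B,B) over a field. *)
From HB Require Import structures.
From mathcomp Require Import all_boot all_order all_algebra.
Set Implicit Arguments. Unset Strict Implicit. Unset Printing Implicit Defensive.
Import Order.TTheory GRing.Theory Num.Theory.
Local Open Scope ring_scope.

(* A finite dimensional k-algebra with basis e_0..e_{d-1}:
   e_i * e_j = \sum_l fd_mul i j l e_l, and 1 = \sum_l fd_one l e_l. *)
Record fdalg (k : fieldType) := FDAlg {
  fd_dim : nat;
  fd_mul : 'I_fd_dim -> 'I_fd_dim -> 'I_fd_dim -> k;
  fd_one : 'I_fd_dim -> k }.

Definition fdalg_axioms (k : fieldType) (B : fdalg k) : Prop :=
  [/\ (0 < fd_dim B)%N,
      (forall i j m p : 'I_(fd_dim B),
         \sum_(l < fd_dim B) fd_mul i j l * fd_mul l m p =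
         \sum_(l < fd_dim B) fd_mul j m l * fd_mul i l p),
      (forall j p : 'I_(fd_dim B),
         \sum_(l < fd_dim B) fd_one l * fd_mul l j p = (j == p)%:R) &
      (forall j p : 'I_(fd_dim B),
         \sum_(l < fd_dim B) fd_one l * fd_mul j l p = (j == p)%:R)].

(* Trivial extension T(B) = B \ltimes DB, basis e_0..e_{d-1} (from B)
   followed by the dual basis e_0^*..e_{d-1}^* (from DB).
   e_i e_j = \sum c_{ijl} e_l;  e_i e_j^* = \sum_l c_{lij} e_l^*
   (since (e_i f)(x) = f(x e_i));  e_j^* e_i = \sum_l c_{ilj} e_l^*
   (since (f e_i)(x) = f(e_i x));  e_i^* e_j^* = 0. *)
Definition triv_ext_mul (k : fieldType) (B : fdalg k)
  (x y z : 'I_(fd_dim B + fd_dim B)) : k :=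
  match split x, split y, split z with
  | inl i, inl j, inl l => fd_mul i j l
  | inl i, inr j, inr l => fd_mul l i j
  | inr j, inl i, inr l => fd_mul i l j
  | _, _, _ => 0
  end.

Definition triv_ext_one (k : fieldType) (B : fdalg k)
  (x : 'I_(fd_dim B + fd_dim B)) : k :=
  match split x with inl i => fd_one i | inr _ => 0 end.

Definition triv_ext (k : fieldType) (B : fdalg k) : fdalg k :=
  @FDAlg k (fd_dim B + fd_dim B) (@triv_ext_mul k B) (@triv_ext_one k B).

(* Hochschild chains in degree n: B^{(x)(n+1)}, coordinates on the basis
   e_{s 0} (x) ... (x) e_{s n}. *)
Definition hchains (k : fieldType) (B : fdalg k) (n : nat) : Type :=
  {ffun 'I_n.+1 -> 'I_(fd_dim B)} -> k.

(* Coefficient of e_t in the inner face d_i (i = 0..n) applied to e_s,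
   where s has n+2 factors and t has n+1:
   d_i(a_0 (x) .. (x) a_{n+1}) = a_0 (x) .. (x) a_i a_{i+1} (x) .. (x) a_{n+1}. *)
Definition inner_face (k : fieldType) (B : fdalg k) (n : nat) (i : 'I_n.+1)
  (s : {ffun 'I_n.+2 -> 'I_(fd_dim B)}) (t : {ffun 'I_n.+1 -> 'I_(fd_dim B)}) : k :=
  fd_mul (s (widen_ord (leqnSn _) i)) (s (lift ord0 i)) (t i) *
  ([forall j : 'I_n.+1, (j < i)%N ==> (t j == s (widen_ord (leqnSn _) j))] &&
   [forall j : 'I_n.+1, (i < j)%N ==> (t j == s (lift ord0 j))])%:R.

(* Last face d_{n+1}(a_0 (x) .. (x) a_{n+1}) = a_{n+1} a_0 (x) a_1 (x) .. (x) a_n. *)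
Definition last_face (k : fieldType) (B : fdalg k) (n : nat)
  (s : {ffun 'I_n.+2 -> 'I_(fd_dim B)}) (t : {ffun 'I_n.+1 -> 'I_(fd_dim B)}) : k :=
  fd_mul (s ord_max) (s ord0) (t ord0) *
  [forall j : 'I_n.+1, (0 < j)%N ==> (t j == s (widen_ord (leqnSn _) j))]%:R.

Definition hbd (k : fieldType) (B : fdalg k) (n : nat)
  (z : hchains B n.+1) : hchains B n :=
  fun t => \sum_(s : {ffun 'I_n.+2 -> 'I_(fd_dim B)})
    z s * (\sum_(i < n.+1) (-1) ^+ i * inner_face i s t
           + (-1) ^+ n.+1 * last_face s t).

Definition is_hcycle (k : fieldType) (B : fdalg k) (n : nat) : hchains B n -> Prop :=
  match n return hchains B n -> Prop with
  | 0 => fun _ => True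
  | m.+1 => fun z => forall t, hbd z t = 0
  end.

Definition HH_nonzero (k : fieldType) (B : fdalg k) (n : nat) : Prop :=
  exists z : hchains B n,
    is_hcycle z /\ ~ (exists w : hchains B n.+1, forall t, hbd w t = z t).

Definition HHdim_infinite (k : fieldType) (B : fdalg k) : Prop :=
  forall N : nat, exists2 n : nat, (N <= n)%N & HH_nonzero B n.

From mathcomp Require Import all_boot all_order all_algebra.
From Stdlib Require Import FunctionalExtensionality.
From mathcomp Require Import ring zify.
Set Implicit Arguments. Unset Strict Implicit. Unset Printing Implicit Defensive.
Import Order.TTheory GRing.Theory Num.Theory.
Local Open Scope ring_scope.

(* With C := T(A), the functional tau(b, f) = f(1) on C satisfies tau(uv) = tau(vu), and the
   pairing (u, v) |-> tau(uv) identifies DC with C.  Let iota, rho : T(C) -> C be the projection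
   onto C and the projection onto DC followed by this identification ([alg_part], [dual_part]);
   then rho(ab) = iota(a) rho(b) + rho(a) iota(b).  Hence the cochain
   phi(a_0, ..., a_n) = tau(rho(a_0) ... rho(a_n)) satisfies phi o b = (1 - (-1)^n) psi, where
   psi(a_0, ..., a_n+1) = tau(iota(a_0) rho(a_1) ... rho(a_n+1)): the inner faces telescope, and
   the last face is brought into the same form by a cyclic rotation under tau.  So phi is a
   cocycle in every even degree.  As DC . DC = 0 in T(C), every elementary tensor of vectors of
   DC is a cycle, and phi does not vanish on all of them because tau(e_i^* ) = 1_i is nonzero
   for some i. *)

Lemma sum_mul_eqr (k : nzRingType) (T : finType) (F : T -> k) (a : T) :
  \sum_t F t * (t == a)%:R = F a.
Proof.
rewrite (bigD1 a) //= eqxx mulr1 big1 ?addr0 // => t /negbTE->; exact: mulr0.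
Qed.

Lemma sum_eq_mull (k : nzRingType) (T : finType) (F : T -> k) (a : T) :
  \sum_t (a == t)%:R * F t = F a.
Proof.
rewrite -[RHS](sum_mul_eqr F a); apply: eq_bigr => t _.
by rewrite eq_sym; case: eqP; rewrite ?mul0r ?mulr0 ?mul1r ?mulr1.
Qed.

Lemma sum_section (k : nzRingType) (I T : finType) (F : T -> k) (M : I -> T)
    (pi : T -> I) :
  cancel M pi -> \sum_t F t * (t == M (pi t))%:R = \sum_x F (M x).
Proof.
move=> MK; under eq_bigr => t _ do rewrite mulr_natr mulrb.
rewrite -big_mkcond (reindex_onto M pi) /=; last by move=> t /eqP.
by apply: eq_bigl => x; rewrite MK !eqxx.
Qed.

Section StructureConstants.
Variables (k : fieldType) (m : nat).
Variables (mc : 'I_m -> 'I_m -> 'I_m -> k) (one : 'I_m -> k).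

Definition vmul (u v : 'I_m -> k) : 'I_m -> k :=
  fun z => \sum_x \sum_y u x * v y * mc x y z.

Definition evec (r : 'I_m) : 'I_m -> k := fun z => (r == z)%:R.

Lemma vmul_evec c e z : vmul (evec c) (evec e) z = mc c e z.
Proof.
rewrite /vmul -(sum_eq_mull (fun x => mc x e z) c); apply: eq_bigr => x _.
rewrite -(sum_eq_mull (fun y => mc x y z) e) mulr_sumr; apply: eq_bigr => y _.
by rewrite /evec mulrA.
Qed.

Lemma vmul0l v z : vmul (fun=> 0) v z = 0.
Proof. by rewrite /vmul big1 // => x _; rewrite big1 // => y _; rewrite !mul0r. Qed.

Lemma vmul0r v z : vmul v (fun=> 0) z = 0.
Proof. by rewrite /vmul big1 // => x _; rewrite big1 // => y _; rewrite mulr0 mul0r. Qed.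

Lemma vmul_suml (I : finType) (c : I -> k) (f : I -> 'I_m -> k) v z :
  vmul (fun x => \sum_i c i * f i x) v z = \sum_i c i * vmul (f i) v z.
Proof.
rewrite /vmul; under eq_bigr => x _ do under eq_bigr => y _ do rewrite !mulr_suml.
under eq_bigr => x _ do rewrite exchange_big /=.
rewrite exchange_big /=; apply: eq_bigr => i _; rewrite mulr_sumr.
by apply: eq_bigr => x _; rewrite mulr_sumr; apply: eq_bigr => y _; rewrite !mulrA.
Qed.

Lemma vmul_sumr (I : finType) (c : I -> k) (f : I -> 'I_m -> k) u z :
  vmul u (fun y => \sum_i c i * f i y) z = \sum_i c i * vmul u (f i) z.
Proof.
rewrite /vmul; under eq_bigr => x _ do under eq_bigr => y _ do rewrite mulr_sumr !mulr_suml.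
under eq_bigr => x _ do rewrite exchange_big /=.
rewrite exchange_big /=; apply: eq_bigr => i _; rewrite mulr_sumr.
by apply: eq_bigr => x _; rewrite mulr_sumr; apply: eq_bigr => y _; ring.
Qed.

Lemma vec_expand (v : 'I_m -> k) : v = fun z => \sum_r v r * evec r z.
Proof. by apply: functional_extensionality => z; rewrite sum_mul_eqr. Qed.

Lemma vmul_vmull u v w z : vmul (vmul u v) w z =
  \sum_a \sum_b \sum_c u a * v b * w c * \sum_l mc a b l * mc l c z.
Proof.
rewrite /vmul /=; under eq_bigr => l _ do under eq_bigr => c _ do rewrite !mulr_suml.
under eq_bigr => l _ do under eq_bigr => c _ do under eq_bigr => a _ do rewrite !mulr_suml.
rewrite exchange_big; under eq_bigr => c _ do rewrite exchange_big.
under eq_bigr => c _ do under eq_bigr => a _ do rewrite exchange_big.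
rewrite exchange_big; under eq_bigr => a _ do rewrite exchange_big.
do 3! (apply: eq_bigr => ? _); rewrite mulr_sumr; apply: eq_bigr => l _; ring.
Qed.

Lemma vmul_vmulr u v w z : vmul u (vmul v w) z =
  \sum_a \sum_b \sum_c u a * v b * w c * \sum_l mc b c l * mc a l z.
Proof.
rewrite /vmul /=; under eq_bigr => a _ do under eq_bigr => l _ do rewrite mulr_sumr !mulr_suml.
under eq_bigr => a _ do under eq_bigr => l _ do under eq_bigr => b _ do rewrite mulr_sumr !mulr_suml.
apply: eq_bigr => a _; rewrite exchange_big; apply: eq_bigr => b _.
rewrite exchange_big; apply: eq_bigr => c _; rewrite mulr_sumr; apply: eq_bigr => l _; ring.
Qed.

Definition vprod (l : seq ('I_m -> k)) : 'I_m -> k := foldr vmul one l.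

Lemma vprod_slot_expand l1 v l2 z :
  vprod (l1 ++ v :: l2) z = \sum_r v r * vprod (l1 ++ evec r :: l2) z.
Proof.
elim: l1 z => [|u l1 IH] z /=; first by rewrite {1}(vec_expand v) vmul_suml.
rewrite -vmul_sumr; congr (vmul u _ z).
by apply: functional_extensionality => y; rewrite IH.
Qed.

Variable tc : 'I_m -> k.

Definition vtrace (v : 'I_m -> k) : k := \sum_z v z * tc z.

Lemma vtrace_evec c : vtrace (evec c) = tc c.
Proof. exact: sum_eq_mull. Qed.

Lemma vtrace_slot_expand l1 v l2 :
  vtrace (vprod (l1 ++ v :: l2)) = \sum_r v r * vtrace (vprod (l1 ++ evec r :: l2)).
Proof.
rewrite /vtrace; under eq_bigr => z _ do rewrite vprod_slot_expand mulr_suml.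
rewrite exchange_big; apply: eq_bigr => r _; rewrite mulr_sumr.
by apply: eq_bigr => z _; rewrite mulrA.
Qed.

Lemma vtrace_slot_sum (I : finType) l1 (c : I -> k) (f : I -> 'I_m -> k) l2 :
  vtrace (vprod (l1 ++ (fun z => \sum_i c i * f i z) :: l2)) =
  \sum_i c i * vtrace (vprod (l1 ++ f i :: l2)).
Proof.
rewrite vtrace_slot_expand; under eq_bigr => r _ do rewrite mulr_suml.
rewrite exchange_big; apply: eq_bigr => i _.
by rewrite vtrace_slot_expand mulr_sumr; apply: eq_bigr => r _; rewrite mulrA.
Qed.

Lemma vtrace_slotD l1 u v l2 :
  vtrace (vprod (l1 ++ (fun z => u z + v z) :: l2)) =
  vtrace (vprod (l1 ++ u :: l2)) + vtrace (vprod (l1 ++ v :: l2)).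
Proof.
by rewrite !(vtrace_slot_expand l1) -big_split; apply: eq_bigr => r _; rewrite mulrDl.
Qed.

Section Algebra.
Hypothesis mcA : forall i j p q : 'I_m,
  \sum_l mc i j l * mc l p q = \sum_l mc j p l * mc i l q.
Hypothesis mc1l : forall j p : 'I_m, \sum_l one l * mc l j p = (j == p)%:R.
Hypothesis mc1r : forall j p : 'I_m, \sum_l one l * mc j l p = (j == p)%:R.

Lemma vmulA u v w : vmul (vmul u v) w = vmul u (vmul v w).
Proof.
apply: functional_extensionality => z; rewrite vmul_vmull vmul_vmulr.
by do 3! (apply: eq_bigr => ? _); rewrite mcA.
Qed.

Lemma vmul1l v : vmul one v = v.
Proof.
apply: functional_extensionality => z; rewrite /vmul exchange_big.
rewrite -[RHS](sum_mul_eqr v z); apply: eq_bigr => y _.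
by rewrite -mc1l mulr_sumr; apply: eq_bigr => x _; ring.
Qed.

Lemma vmul1r v : vmul v one = v.
Proof.
apply: functional_extensionality => z; rewrite /vmul.
rewrite -[RHS](sum_mul_eqr v z); apply: eq_bigr => x _.
by rewrite -mc1r mulr_sumr; apply: eq_bigr => y _; ring.
Qed.

Lemma vprod_cat l1 l2 : vprod (l1 ++ l2) = vmul (vprod l1) (vprod l2).
Proof. by elim: l1 => [|u l1 IH] /=; rewrite ?vmul1l // IH vmulA. Qed.

Lemma vprod_cat_mul l1 u v l2 :
  vprod (l1 ++ vmul u v :: l2) = vprod (l1 ++ u :: v :: l2).
Proof. by elim: l1 => [|w l1 IH] /=; rewrite ?IH // vmulA. Qed.

Lemma vtrace_vprod_neq0 n v : vtrace v != 0 ->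
  exists2 l : seq 'I_m, size l = n & vtrace (vprod (v :: map evec l)) != 0.
Proof.
elim: n v => [|n IH] v trv; first by exists [::]; rewrite //= vmul1r.
have [a tra] : exists a, vtrace (vmul v (evec a)) != 0.
  apply/existsP; apply: contraNT trv => /existsPn tr0.
  have -> : v = vprod ([:: v] ++ one :: [::]) by rewrite /= !vmul1r.
  rewrite vtrace_slot_expand big1 // => a _.
  by rewrite /= vmul1r (eqP (negPn (tr0 a))) mulr0.
have [l szl trl] := IH _ tra.
exists (a :: l); first by rewrite /= szl.
by rewrite -[_ :: _]/([::] ++ _) -vprod_cat_mul.
Qed.

Hypothesis tc_comm : forall x y, \sum_z mc x y z * tc z = \sum_z mc y x z * tc z.

Lemma vtrace_comm u v : vtrace (vmul u v) = vtrace (vmul v u).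
Proof.
have trE w w' : vtrace (vmul w w') = \sum_x \sum_y w x * w' y * \sum_z mc x y z * tc z.
  rewrite /vtrace; under eq_bigr => z _ do rewrite /vmul mulr_suml.
  rewrite exchange_big; apply: eq_bigr => x _.
  under eq_bigr => z _ do rewrite mulr_suml.
  rewrite exchange_big; apply: eq_bigr => y _.
  by rewrite mulr_sumr; apply: eq_bigr => z _; rewrite mulrA.
rewrite !trE exchange_big; apply: eq_bigr => x _; apply: eq_bigr => y _.
by rewrite tc_comm [u y * _]mulrC.
Qed.

Lemma vtrace_rot w l : vtrace (vprod (w :: l)) = vtrace (vprod (rcons l w)).
Proof. by rewrite -cats1 vprod_cat /= vmul1r vtrace_comm. Qed.

End Algebra.

End StructureConstants.

Arguments evec {k m}.

Lemma split_lshift m n (j : 'I_m) : split (lshift n j) = inl j.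
Proof. exact: (unsplitK (inl j)). Qed.

Lemma split_rshift m n (j : 'I_n) : split (rshift m j) = inr j.
Proof. exact: (unsplitK (inr j)). Qed.

Lemma fdalg_one_neq0 (k : fieldType) (B : fdalg k) :
  fdalg_axioms B -> exists i, @fd_one k B i != 0.
Proof.
case=> dim_gt0 _ mul1l _; apply/existsP; apply: contraT => /existsPn one0.
have := mul1l (Ordinal dim_gt0) (Ordinal dim_gt0).
by rewrite eqxx big1 => [/esym/eqP|l _]; rewrite ?oner_eq0 // (eqP (negPn (one0 l))) mul0r.
Qed.

Lemma sum_alternating_adjacent (R : comNzRingType) (F : nat -> R) n :
  \sum_(i < n.+1) (-1) ^+ i * (F i + F i.+1) = F 0 + (-1) ^+ n * F n.+1.
Proof.
elim: n => [|n IH]; first by rewrite big_ord1 expr0 !mul1r.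
by rewrite big_ord_recr /= IH !exprS; ring.
Qed.

Section TrivialExtension.
Variables (k : fieldType) (B : fdalg k).
Local Notation n := (fd_dim B).
Local Notation mT := (@triv_ext_mul k B).

Lemma triv_ext_mulLLL a b c : mT (lshift n a) (lshift n b) (lshift n c) = fd_mul a b c.
Proof. by rewrite /triv_ext_mul !split_lshift. Qed.
Lemma triv_ext_mulLLR a b c : mT (lshift n a) (lshift n b) (rshift n c) = 0.
Proof. by rewrite /triv_ext_mul !split_lshift split_rshift. Qed.
Lemma triv_ext_mulLRL a b c : mT (lshift n a) (rshift n b) (lshift n c) = 0.
Proof. by rewrite /triv_ext_mul !split_lshift split_rshift. Qed.
Lemma triv_ext_mulLRR a b c : mT (lshift n a) (rshift n b) (rshift n c) = fd_mul c a b.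
Proof. by rewrite /triv_ext_mul split_lshift !split_rshift. Qed.
Lemma triv_ext_mulRLL a b c : mT (rshift n a) (lshift n b) (lshift n c) = 0.
Proof. by rewrite /triv_ext_mul !split_lshift split_rshift. Qed.
Lemma triv_ext_mulRLR a b c : mT (rshift n a) (lshift n b) (rshift n c) = fd_mul b c a.
Proof. by rewrite /triv_ext_mul split_lshift !split_rshift. Qed.
Lemma triv_ext_mulRR a b x : mT (rshift n a) (rshift n b) x = 0.
Proof. by rewrite /triv_ext_mul !split_rshift. Qed.

Lemma triv_ext_oneL i : triv_ext_one (lshift n i) = fd_one i.
Proof. by rewrite /triv_ext_one split_lshift. Qed.
Lemma triv_ext_oneR i : @triv_ext_one k B (rshift n i) = 0.
Proof. by rewrite /triv_ext_one split_rshift. Qed.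

Definition triv_ext_swap (y : 'I_(n + n)) : 'I_(n + n) :=
  match split y with inl a => rshift n a | inr a => lshift n a end.

Lemma triv_ext_swapL a : triv_ext_swap (lshift n a) = rshift n a.
Proof. by rewrite /triv_ext_swap split_lshift. Qed.
Lemma triv_ext_swapR a : triv_ext_swap (rshift n a) = lshift n a.
Proof. by rewrite /triv_ext_swap split_rshift. Qed.

Lemma triv_ext_swapK : involutive triv_ext_swap.
Proof.
by move=> y; case: (split_ordP y) => a ->;
  rewrite ?triv_ext_swapL ?triv_ext_swapR ?triv_ext_swapL.
Qed.

Lemma triv_ext_mul_swapl z c y : mT (triv_ext_swap z) c y = mT c (triv_ext_swap y) z.
Proof.
by case: (split_ordP z) => a ->; case: (split_ordP c) => b ->; case: (split_ordP y) => e ->;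
  rewrite ?triv_ext_swapL ?triv_ext_swapR
  ?triv_ext_mulLLL ?triv_ext_mulLLR ?triv_ext_mulLRL ?triv_ext_mulLRR
  ?triv_ext_mulRLL ?triv_ext_mulRLR ?triv_ext_mulRR.
Qed.

Lemma triv_ext_mul_swapr z c y : mT c (triv_ext_swap z) y = mT (triv_ext_swap y) c z.
Proof. by rewrite -{2}[z]triv_ext_swapK triv_ext_mul_swapl triv_ext_swapK. Qed.

Definition triv_ext_trace (z : 'I_(n + n)) : k :=
  match split z with inl _ => 0 | inr i => fd_one i end.

Lemma triv_ext_traceL i : triv_ext_trace (lshift n i) = 0.
Proof. by rewrite /triv_ext_trace split_lshift. Qed.
Lemma triv_ext_traceR i : triv_ext_trace (rshift n i) = fd_one i.
Proof. by rewrite /triv_ext_trace split_rshift. Qed.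

Lemma sum_evec_swap (F : 'I_(n + n) -> k) z :
  \sum_i F i * evec (triv_ext_swap i) z = F (triv_ext_swap z).
Proof.
rewrite -(sum_mul_eqr F); apply: eq_bigr => i _.
by rewrite /evec (can2_eq triv_ext_swapK triv_ext_swapK).
Qed.

End TrivialExtension.

Definition triv_ext_mulE := (triv_ext_mulLLL, triv_ext_mulLLR, triv_ext_mulLRL,
  triv_ext_mulLRR, triv_ext_mulRLL, triv_ext_mulRLR, triv_ext_mulRR).
Definition triv_ext_oneE := (triv_ext_oneL, triv_ext_oneR).
Definition triv_ext_traceE := (triv_ext_traceL, triv_ext_traceR).

(* [set] hides each simplified sum so that the next [under] reaches the following one. *)
Ltac simpl_triv_ext_sums E :=
  repeat (under eq_bigr => ? _ do rewrite ?triv_ext_mulE ?E ?mul0r ?mulr0;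
          let s := fresh "s" in set s := (bigop _ _ _));
  repeat match goal with s := _ |- _ => subst s end;
  rewrite ?big1_eq ?addr0 ?add0r.

Section TrivialExtensionAlgebra.
Variables (k : fieldType) (B : fdalg k).
Local Notation n := (fd_dim B).
Local Notation mT := (@triv_ext_mul k B).
Hypothesis axB : fdalg_axioms B.

Lemma triv_ext_mulA i j p q :
  \sum_l mT i j l * mT l p q = \sum_l mT j p l * mT i l q.
Proof.
case: axB => _ mulA _ _.
case: (split_ordP i) => a ->; case: (split_ordP j) => b ->;
case: (split_ordP p) => c ->; case: (split_ordP q) => e ->;
  rewrite !big_split_ord /=; simpl_triv_ext_sums triv_ext_mulE.
all: try done.
- by rewrite -mulA; apply: eq_bigr => l _; rewrite mulrC.
- by under eq_bigr do rewrite mulrC; rewrite mulA; apply: eq_bigr => l _; rewrite mulrC.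
- by under eq_bigr do rewrite mulrC; rewrite -mulA.
Qed.

Lemma triv_ext_mul1l j p : \sum_l triv_ext_one l * mT l j p = (j == p)%:R.
Proof.
case: axB => _ _ mul1l mul1r.
case: (split_ordP j) => a ->; case: (split_ordP p) => b ->;
  rewrite !big_split_ord /=; simpl_triv_ext_sums triv_ext_oneE.
all: rewrite ?eq_shift //; by rewrite mul1r eq_sym.
Qed.

Lemma triv_ext_mul1r j p : \sum_l triv_ext_one l * mT j l p = (j == p)%:R.
Proof.
case: axB => _ _ mul1l mul1r.
case: (split_ordP j) => a ->; case: (split_ordP p) => b ->;
  rewrite !big_split_ord /=; simpl_triv_ext_sums triv_ext_oneE.
all: rewrite ?eq_shift //; by rewrite mul1l eq_sym.
Qed.

Lemma triv_ext_trace_comm x y :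
  \sum_z mT x y z * triv_ext_trace z = \sum_z mT y x z * triv_ext_trace z.
Proof.
case: axB => _ _ mul1l mul1r.
case: (split_ordP x) => a ->; case: (split_ordP y) => b ->;
  rewrite !big_split_ord /=; simpl_triv_ext_sums triv_ext_traceE => //.
all: under eq_bigr do rewrite mulrC; under [RHS]eq_bigr do rewrite mulrC.
all: by rewrite mul1l mul1r.
Qed.

End TrivialExtensionAlgebra.

Section DoubleTrivialExtension.
Variables (k : fieldType) (B : fdalg k).
Local Notation C := (triv_ext B).
Local Notation m := (fd_dim C).
Local Notation mC := (@triv_ext_mul k B).
Local Notation mTT := (@triv_ext_mul k C).

Definition alg_part (x : 'I_(fd_dim (triv_ext C))) : 'I_m -> k :=
  match split x with inl y => evec y | inr _ => fun=> 0 end.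

(* The dual basis vector e_y^* of DC is identified with [triv_ext_swap y] through
   the nondegenerate symmetric form of C = T(B). *)
Definition dual_part (x : 'I_(fd_dim (triv_ext C))) : 'I_m -> k :=
  match split x with inl _ => fun=> 0 | inr y => evec (triv_ext_swap y) end.

Lemma alg_partL y : alg_part (lshift m y) = evec y.
Proof. by rewrite /alg_part split_lshift. Qed.
Lemma alg_partR y : alg_part (rshift m y) = fun=> 0.
Proof. by rewrite /alg_part split_rshift. Qed.
Lemma dual_partL y : dual_part (lshift m y) = fun=> 0.
Proof. by rewrite /dual_part split_lshift. Qed.
Lemma dual_partR y : dual_part (rshift m y) = evec (triv_ext_swap y).
Proof. by rewrite /dual_part split_rshift. Qed.

Definition partE := (alg_partL, alg_partR, dual_partL, dual_partR).

Lemma dual_part_mul a b z :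
  \sum_x mTT a b x * dual_part x z =
  vmul mC (alg_part a) (dual_part b) z + vmul mC (dual_part a) (alg_part b) z.
Proof.
rewrite big_split_ord /=.
case: (split_ordP a) => c ->; case: (split_ordP b) => e ->;
  rewrite !partE ?vmul0l ?vmul0r ?vmul_evec; simpl_triv_ext_sums partE => //;
  rewrite sum_evec_swap.
  exact: triv_ext_mul_swapl.
exact: triv_ext_mul_swapr.
Qed.

End DoubleTrivialExtension.

Arguments alg_part {k B}.
Arguments dual_part {k B}.

Section HochschildFaces.
Variables (k : fieldType) (B : fdalg k).
Local Notation X := 'I_(fd_dim B).

Definition merge_at n (i : 'I_n.+1) (s : {ffun 'I_n.+2 -> X}) (x : X) : {ffun 'I_n.+1 -> X} :=
  [ffun j : 'I_n.+1 => if (j < i)%N then s (widen_ord (leqnSn _) j)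
                       else if j == i then x else s (lift ord0 j)].

Definition merge_last n (s : {ffun 'I_n.+2 -> X}) (x : X) : {ffun 'I_n.+1 -> X} :=
  [ffun j : 'I_n.+1 => if j == ord0 then x else s (widen_ord (leqnSn _) j)].

Lemma inner_faceE n (i : 'I_n.+1) s t :
  inner_face i s t = fd_mul (s (widen_ord (leqnSn _) i)) (s (lift ord0 i)) (t i) *
    (t == merge_at i s (t i))%:R.
Proof.
rewrite /inner_face; congr (_ * _%:R); congr nat_of_bool.
apply/andP/eqP => [[/forallP lt_i /forallP gt_i]|->].
  apply/ffunP => j; rewrite ffunE; case: (ltngtP j i) => [lt_ji|gt_ji|/val_inj->].
  - exact/eqP/(implyP (lt_i j)).
  - by rewrite -val_eqE gtn_eqF //; apply/eqP/(implyP (gt_i j)).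
  - by rewrite eqxx.
split; apply/forallP => j; apply/implyP => ij; rewrite ffunE ?ij //.
by rewrite (leq_gtF (ltnW ij)) (_ : j == i = false) //; exact: gtn_eqF.
Qed.

Lemma last_faceE n s t :
  last_face (n := n) s t = fd_mul (s ord_max) (s ord0) (t ord0) *
    (t == merge_last s (t ord0))%:R.
Proof.
rewrite /last_face; congr (_ * _%:R); congr nat_of_bool.
apply/forallP/eqP => [gt0|->].
  apply/ffunP => j; rewrite ffunE; case: eqP => [->//|/eqP j_neq0].
  by apply/eqP/(implyP (gt0 j)); rewrite lt0n.
move=> j; apply/implyP; rewrite lt0n ffunE => j_neq0.
by have /negbTE-> : j != ord0 := j_neq0.
Qed.

Lemma sum_inner_face n (i : 'I_n.+1) s (G : {ffun 'I_n.+1 -> X} -> k) :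
  \sum_t G t * inner_face i s t =
  \sum_x fd_mul (s (widen_ord (leqnSn _) i)) (s (lift ord0 i)) x * G (merge_at i s x).
Proof.
under eq_bigr => t _ do rewrite inner_faceE mulrA.
rewrite (sum_section (fun t => G t * fd_mul _ _ (t i))); last first.
  by move=> x; rewrite ffunE ltnn eqxx.
by apply: eq_bigr => x _; rewrite ffunE ltnn eqxx mulrC.
Qed.

Lemma sum_last_face n s (G : {ffun 'I_n.+1 -> X} -> k) :
  \sum_t G t * last_face s t = \sum_x fd_mul (s ord_max) (s ord0) x * G (merge_last s x).
Proof.
under eq_bigr => t _ do rewrite last_faceE mulrA.
rewrite (sum_section (fun t => G t * fd_mul _ _ (t ord0))); last first.
  by move=> x; rewrite ffunE eqxx.
by apply: eq_bigr => x _; rewrite ffunE eqxx mulrC.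
Qed.

Definition chain_seq n (t : {ffun 'I_n.+1 -> X}) : seq X := mkseq (fun j => t (inord j)) n.+1.

Lemma size_chain_seq n (t : {ffun 'I_n.+1 -> X}) : size (chain_seq t) = n.+1.
Proof. exact: size_mkseq. Qed.

Lemma nth_chain_seq x0 n (t : {ffun 'I_n.+1 -> X}) j :
  (j < n.+1)%N -> nth x0 (chain_seq t) j = t (inord j).
Proof. exact: nth_mkseq. Qed.

Lemma chain_seq_merge_at n (i : 'I_n.+1) s x :
  chain_seq (merge_at i s x) = take i (chain_seq s) ++ x :: drop i.+2 (chain_seq s).
Proof.
have lt_i := ltn_ord i.
have sz_take : size (take i (chain_seq s)) = i by rewrite size_takel // size_chain_seq; lia.
apply: (@eq_from_nth _ x) => [|j]; rewrite size_chain_seq.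
  by rewrite -cat1s !size_cat sz_take size_drop size_chain_seq /=; lia.
move=> lt_j; rewrite nth_chain_seq // ffunE inordK // nth_cat sz_take.
case: (ltngtP j i) => [lt_ji|lt_ij|->]; last by rewrite inord_val eqxx subnn.
  rewrite nth_take // nth_chain_seq; last by lia.
  by congr (s _); apply: val_inj; rewrite /= !inordK //; lia.
rewrite (_ : inord j == i = false); last by rewrite -val_eqE /= inordK // gtn_eqF.
rewrite (_ : (j - i = (j - i.+1).+1)%N); last by lia.
change (nth x (x :: ?l) ?r.+1) with (nth x l r).
rewrite nth_drop nth_chain_seq; last by lia.
by congr (s _); apply: val_inj; rewrite /= /bump /= !inordK //; lia.
Qed.

Lemma chain_seq_merge_last n (s : {ffun 'I_n.+2 -> X}) x :
  chain_seq (merge_last s x) = x :: behead (take n.+1 (chain_seq s)).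
Proof.
apply: (@eq_from_nth _ x) => [|j]; rewrite size_chain_seq.
  by rewrite -cat1s size_cat size_behead size_take size_chain_seq ltnSn.
case: j => [|j] lt_j; rewrite nth_chain_seq // ffunE.
  by rewrite (_ : inord 0 == ord0) // -val_eqE /= inordK.
rewrite (_ : inord j.+1 == ord0 = false); last by rewrite -val_eqE /= inordK.
change (nth x (x :: ?l) ?r.+1) with (nth x l r).
rewrite nth_behead nth_take // nth_chain_seq; last by lia.
by congr (s _); apply: val_inj; rewrite /= !inordK //; lia.
Qed.

Definition hbd_coef n (s : {ffun 'I_n.+2 -> X}) (t : {ffun 'I_n.+1 -> X}) : k :=
  \sum_(i < n.+1) (-1) ^+ i * inner_face i s t + (-1) ^+ n.+1 * last_face s t.

Lemma HH_nonzero_of_cocycle n (phi : {ffun 'I_n.+1 -> X} -> k) (z : hchains B n) :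
    (forall s, \sum_t phi t * hbd_coef s t = 0) -> is_hcycle z ->
  \sum_t phi t * z t != 0 -> HH_nonzero B n.
Proof.
move=> phi_cocycle z_cycle /eqP pairing_neq0; exists z; split=> // -[w bd_w].
apply: pairing_neq0.
under eq_bigr => t _ do rewrite -bd_w /hbd mulr_sumr.
rewrite exchange_big big1 // => s _.
by under eq_bigr => t _ do rewrite mulrCA; rewrite -mulr_sumr phi_cocycle mulr0.
Qed.

Lemma hcycle_basis_mul0 n (t : {ffun 'I_n.+1 -> X}) :
  (forall a b x, fd_mul (t a) (t b) x = 0) -> is_hcycle (fun s => (s == t)%:R : k).
Proof.
case: n t => [//|n] t tt0 u; rewrite /hbd.
under eq_bigr => s _ do rewrite eq_sym.
rewrite sum_eq_mull big1 ?add0r => [|i _]; first by rewrite /last_face tt0 !mul0r mulr0.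
by rewrite /inner_face tt0 !mul0r mulr0.
Qed.

End HochschildFaces.

Section DualTraceCocycle.
Variables (k : fieldType) (B : fdalg k).
Hypothesis axB : fdalg_axioms B.
Local Notation C := (triv_ext B).
Local Notation m := (fd_dim C).
Local Notation X := 'I_(fd_dim (triv_ext C)).
Local Notation mC := (@triv_ext_mul k B).
Local Notation vprodC := (vprod mC (@triv_ext_one k B)).
Local Notation trC := (vtrace (@triv_ext_trace k B)).

Definition dual_trace_cochain n (t : {ffun 'I_n.+1 -> X}) : k :=
  trC (vprodC (map dual_part (chain_seq t))).

Definition alg_slot_term n (s : {ffun 'I_n.+2 -> X}) (j : nat) : k :=
  let L := map dual_part (chain_seq s) in
  trC (vprodC (take j L ++ alg_part (s (inord j)) :: drop j.+1 L)).

Lemma vtrace_dual_part_mul l1 l2 (a b : X) :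
  \sum_x fd_mul a b x * trC (vprodC (l1 ++ dual_part x :: l2)) =
  trC (vprodC (l1 ++ alg_part a :: dual_part b :: l2)) +
  trC (vprodC (l1 ++ dual_part a :: alg_part b :: l2)).
Proof.
rewrite -vtrace_slot_sum.
have -> : (fun z => \sum_x fd_mul a b x * dual_part x z) =
          (fun z => vmul mC (alg_part a) (dual_part b) z + vmul mC (dual_part a) (alg_part b) z).
  by apply: functional_extensionality => z; rewrite -dual_part_mul.
by rewrite vtrace_slotD -!(vprod_cat_mul _ (triv_ext_mulA axB)).
Qed.

Lemma nth_dual_chain n (s : {ffun 'I_n.+2 -> X}) j : (j < n.+2)%N ->
  nth (dual_part (s ord0)) (map dual_part (chain_seq s)) j = dual_part (s (inord j)).
Proof. by move=> lt_j; rewrite (nth_map (s ord0)) ?size_chain_seq ?nth_chain_seq. Qed.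

Lemma pairing_inner_face n (i : 'I_n.+1) (s : {ffun 'I_n.+2 -> X}) :
  \sum_t dual_trace_cochain t * inner_face i s t = alg_slot_term s i + alg_slot_term s i.+1.
Proof.
have lt_i := ltn_ord i.
rewrite sum_inner_face /alg_slot_term /dual_trace_cochain.
under eq_bigr => x _ do rewrite chain_seq_merge_at map_cat map_cons map_take map_drop.
rewrite vtrace_dual_part_mul.
set L := map dual_part (chain_seq s).
have sizeL : size L = n.+2 by rewrite size_map size_chain_seq.
have -> : widen_ord (leqnSn _) i = inord i by apply: val_inj; rewrite /= inordK //; lia.
have -> : lift ord0 i = inord i.+1 by apply: val_inj; rewrite /= inordK.
congr (_ + _).
  by rewrite [drop i.+1 L](drop_nth (dual_part (s ord0))) ?sizeL ?nth_dual_chain //; lia.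
rewrite (take_nth (dual_part (s ord0))) ?sizeL ?nth_dual_chain ?cat_rcons //; lia.
Qed.

Lemma pairing_last_face n (s : {ffun 'I_n.+2 -> X}) :
  \sum_t dual_trace_cochain t * last_face s t = alg_slot_term s n.+1 + alg_slot_term s 0.
Proof.
rewrite sum_last_face /alg_slot_term /dual_trace_cochain.
under eq_bigr => x _ do rewrite chain_seq_merge_last map_cons -behead_map map_take.
rewrite (vtrace_dual_part_mul [::]) !cat0s.
set L := map dual_part (chain_seq s).
have sizeL : size L = n.+2 by rewrite size_map size_chain_seq.
have rot := vtrace_rot (triv_ext_mulA axB) (triv_ext_mul1l axB) (triv_ext_mul1r axB)
  (triv_ext_trace_comm axB).
rewrite (rot (dual_part (s ord_max))) (rot (alg_part (s ord_max))).
have -> : ord_max = inord n.+1 :> 'I_n.+2 by apply: val_inj; rewrite /= inordK.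
have -> : ord0 = inord 0 :> 'I_n.+2 by apply: val_inj; rewrite /= inordK.
set M := behead (take n.+1 L).
have takeL : take n.+1 L = dual_part (s (inord 0)) :: M.
  have L0 : L = dual_part (s (inord 0)) :: drop 1 L.
    by rewrite -nth_dual_chain // -drop_nth ?drop0 ?sizeL.
  by rewrite /M L0.
have L_rcons : L = rcons (take n.+1 L) (dual_part (s (inord n.+1))).
  by rewrite -nth_dual_chain // -take_nth ?sizeL // -sizeL take_size.
congr (_ + _); first by rewrite drop_oversize ?sizeL // cats1 takeL.
by rewrite [in drop 1 L]L_rcons takeL /= drop0.
Qed.

Lemma dual_trace_cocycle n (s : {ffun 'I_n.+2 -> X}) :
  ~~ odd n -> \sum_t dual_trace_cochain t * hbd_coef s t = 0.
Proof.
move=> even_n; rewrite /hbd_coef.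
under eq_bigr => t _ do rewrite mulrDr mulr_sumr.
rewrite big_split /= exchange_big /=.
under eq_bigr => i _ do
  (under eq_bigr => t _ do rewrite mulrCA; rewrite -mulr_sumr pairing_inner_face).
under [X in _ + X]eq_bigr => t _ do rewrite mulrCA.
rewrite -mulr_sumr pairing_last_face sum_alternating_adjacent.
by rewrite exprS -signr_odd (negbTE even_n) expr0; ring.
Qed.

Lemma dual_trace_cochain_neq0 n :
  exists y : {ffun 'I_n.+1 -> 'I_m}, dual_trace_cochain [ffun j => rshift m (y j)] != 0.
Proof.
have [i0 one_i0] := fdalg_one_neq0 axB.
pose c0 : 'I_m := rshift (fd_dim B) i0.
have tr_c0 : trC (evec c0) != 0 by rewrite vtrace_evec triv_ext_traceR.
have [l size_l tr_l] :=
  vtrace_vprod_neq0 (triv_ext_mulA axB) (triv_ext_mul1r axB) n tr_c0.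
exists [ffun j : 'I_n.+1 => triv_ext_swap (nth c0 (c0 :: l) j)].
rewrite /dual_trace_cochain (_ : map _ _ = map evec (c0 :: l)) //.
apply: (@eq_from_nth _ (evec c0)) => [|j]; rewrite size_map size_chain_seq.
  by rewrite size_map /= size_l.
move=> lt_j; rewrite (nth_map (rshift m c0 : X)) ?size_chain_seq // nth_chain_seq //.
rewrite !ffunE dual_partR triv_ext_swapK inordK //.
by rewrite (nth_map c0) //= size_l.
Qed.

End DualTraceCocycle.

Theorem HH_nonzero_triv_ext2 (k : fieldType) (A : fdalg k) n :
  fdalg_axioms A -> ~~ odd n -> HH_nonzero (triv_ext (triv_ext A)) n.
Proof.
move=> axA even_n; have [y phi_neq0] := dual_trace_cochain_neq0 axA n.
apply: (HH_nonzero_of_cocycle (phi := @dual_trace_cochain k A n)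
  (z := fun s => (s == [ffun j => rshift _ (y j)])%:R)).
- by move=> s; apply: dual_trace_cocycle.
- by apply: hcycle_basis_mul0 => a b x; rewrite !ffunE; apply: triv_ext_mulRR.
- by rewrite sum_mul_eqr.
Qed.

Theorem corollary3p6 (k : closedFieldType) (A : fdalg k) :
  fdalg_axioms A -> HHdim_infinite (triv_ext (triv_ext A)).
Proof.
move=> axA N; exists N.*2; first by rewrite -addnn leq_addr.
by apply: HH_nonzero_triv_ext2; rewrite ?odd_double.
Qed.
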